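(* Let $x^{(0)}\in\mathbb R^n$, $h_0:=H(x^{(0)})$, let $\epsilon>0$ be small, and let $t_\epsilon$ be the unique solution of $f(t_\epsilon)=\epsilon$, where $f(t)=\frac1{h_0}\tanh(\frac{h_0t}2)$ if $h_0\ne0$ and $f(t)=t/2$ if $h_0=0$. Let $x(t)$ be the solution of $\dot x_i=x_i\big(\sum_{j>i}a_jx_j-\sum_{j<i}a_jx_j\big)$ with $x(0)=x^{(0)}$. Then $x(t_\epsilon)=\mathcal K(x^{(0)})$. Consequently, since $t_\epsilon$ depends on $x^{(0)}$ only through $H(x^{(0)})$ (which is preserved by $\mathcal K$), the $m$-th iterate satisfies $\mathcal K^m(x^{(0)})=x(mt_\epsilon)$ for all $m\ge0$, and every first integral of the continuous system is invariant under $\mathcal K$.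
   Context: $(a_1,\dots,a_n)\in\mathbb R^n\setminus\{0\}$, $H=a_1x_1+\dots+a_nx_n$, $v_0:=0$, $v_i:=a_1x_1+\dots+a_ix_i$. $\mathcal K$ is the Kahan map with step size $2\epsilon$: $\tilde x_i=x_i\dfrac{(1-\epsilon H)(1+\epsilon H)}{(1-\epsilon H+2\epsilon v_{i-1})(1-\epsilon H+2\epsilon v_i)}$, $i=1,\dots,n$ (points where denominators vanish or the solution ceases to exist are excluded). *)

From Stdlib Require Import Reals Lra.
Open Scope R_scope.

(* Vectors in R^n are represented as functions nat -> R; only the
   coordinates with index i < n (0-based: paper's x_{i+1}) are meaningful. *)

Fixpoint psum (f : nat -> R) (k : nat) : R :=
  match k with
  | O => 0
  | S k' => psum f k' + f k'
  end.

Definition Hf (n : nat) (a x : nat -> R) : R := psum (fun j => a j * x j) n.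

Definition vpart (a x : nat -> R) (k : nat) : R := psum (fun j => a j * x j) k.

Definition kden (eps : R) (n : nat) (a x : nat -> R) (k : nat) : R :=
  1 - eps * Hf n a x + 2 * eps * vpart a x k.

(* Kahan map with step size 2 eps; component i (0-based) is the paper's
   component i+1, whose denominator is (..v_{i})(..v_{i+1}) in 0-based
   partial sums, i.e. paper's v_{(i+1)-1} and v_{i+1}. *)
Definition kahan (eps : R) (n : nat) (a x : nat -> R) : nat -> R :=
  fun i => x i * ((1 - eps * Hf n a x) * (1 + eps * Hf n a x))
           / (kden eps n a x i * kden eps n a x (S i)).

Definition kahan_defined (eps : R) (n : nat) (a x : nat -> R) : Prop :=
  forall k, (k <= n)%nat -> kden eps n a x k <> 0.

(* Vector field: xdot_i = x_i (sum_{j>i} a_j x_j - sum_{j<i} a_j x_j) *)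
Definition vfield (n : nat) (a x : nat -> R) (i : nat) : R :=
  x i * ((Hf n a x - vpart a x (S i)) - vpart a x i).

(* x solves the ODE at every time t in [0, T] (two-sided derivative; the
   solution exists on an open interval containing [0, T]). *)
Definition ode_sol (n : nat) (a : nat -> R) (x : R -> nat -> R) (T : R) : Prop :=
  forall t, 0 <= t <= T -> forall i, (i < n)%nat ->
    derivable_pt_lim (fun s => x s i) t (vfield n a (x t) i).

Definition veq (n : nat) (y z : nat -> R) : Prop := forall i, (i < n)%nat -> y i = z i.

Definition ftime (h t : R) : R :=
  if Req_EM_T h 0 then t / 2 else tanh (h * t / 2) / h.

(* A first integral of the continuous system: a function on R^n (depending
   only on the n meaningful coordinates) that is constant along solutions. *)
Definition first_integral (n : nat) (a : nat -> R) (I : (nat -> R) -> R) : Prop :=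
  (forall y z, veq n y z -> I y = I z) /\
  (forall (y : R -> nat -> R) (T : R), 0 <= T -> ode_sol n a y T -> I (y T) = I (y 0)).

From Stdlib Require Import Reals Psatz.
Open Scope R_scope.

(* Along a solution [H] is conserved, so every partial sum [v_k] solves the logistic
   equation [v' = H v - v^2]; with [f = ftime H], its solution is
   [v_k(t) = v_k(0) (1 + f(t) H) / (1 - f(t) H + 2 f(t) v_k(0))], and then the linear
   equation [x_i' = x_i (H - v_i - v_(i+1))] is solved by the [i]-th component of the
   Kahan map with step [2 f(t)].  Each closed form is checked by showing that its defect
   [E] satisfies a linear equation [E' = g E] with [E(0) = 0], hence vanishes.  Since
   [t_eps] depends on [x(0)] only through the conserved [H], time-translation gives the
   iterates. *)

Lemma derivable_pt_lim_eq (f g : R -> R) (t l l' : R) :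
  derivable_pt_lim f t l -> (forall s, f s = g s) -> l = l' -> derivable_pt_lim g t l'.
Proof. intros Hf E <-. exact (derivable_pt_lim_ext f g t l E Hf). Qed.

Lemma derivable_pt_lim_continuity_pt (f : R -> R) (t l : R) :
  derivable_pt_lim f t l -> continuity_pt f t.
Proof. intros Hf. apply derivable_continuous_pt. exists l. exact Hf. Qed.

Lemma derivable_pt_lim_exp_scal (c t : R) :
  derivable_pt_lim (fun s => exp (c * s)) t (c * exp (c * t)).
Proof.
  apply (derivable_pt_lim_eq _ _ _ _ _
    (derivable_pt_lim_comp _ exp t _ _ (derivable_pt_lim_scal id c t 1 (derivable_pt_lim_id t))
       (derivable_pt_lim_exp _))); [reflexivity|].
  unfold mult_real_fct, id. ring.
Qed.

(* If [M] bounds [g] on [[0, T]], then [E^2 e^(-2 M s)] is nonincreasing. *)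
Lemma linear_ode_zero (E g : R -> R) (T : R) :
  (forall t, 0 <= t <= T -> derivable_pt_lim E t (g t * E t)) ->
  (forall t, 0 <= t <= T -> continuity_pt g t) ->
  E 0 = 0 -> forall t, 0 <= t <= T -> E t = 0.
Proof.
  intros HE Hg E0 t Ht.
  destruct (Req_dec t 0) as [->|tn0]; [exact E0|].
  destruct (continuity_ab_maj g 0 T ltac:(lra) Hg) as [c [Hc _]].
  set (M := g c).
  set (F := fun s => E s ^ 2 * exp (-2 * M * s)).
  destruct (MVT_cor2 F (fun s => 2 * (g s - M) * (E s ^ 2 * exp (-2 * M * s))) 0 t)
    as [z [HFt Hz]]; [lra| |].
  { intros z Hz.
    pose proof (derivable_pt_lim_mult _ _ z _ _
      (derivable_pt_lim_mult _ _ z _ _ (HE z ltac:(lra)) (HE z ltac:(lra)))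
      (derivable_pt_lim_exp_scal (-2 * M) z)) as HF.
    apply (derivable_pt_lim_eq _ _ _ _ _ HF).
    - intros s. unfold F, mult_fct. ring.
    - unfold mult_fct. ring. }
  assert (gz : g z <= M) by (apply Hc; lra).
  pose proof (exp_pos (-2 * M * z)). pose proof (exp_pos (-2 * M * t)).
  assert (F0 : F 0 = 0) by (unfold F; rewrite E0; ring).
  assert (Ft : F t <= 0).
  { assert (0 <= E z ^ 2 * exp (-2 * M * z)) by (apply Rmult_le_pos; [apply pow2_ge_0|lra]).
    assert ((g z - M) * (E z ^ 2 * exp (-2 * M * z)) <= 0) by nra.
    nra. }
  unfold F in Ft. pose proof (pow2_ge_0 (E t)).
  apply Rsqr_0_uniq. unfold Rsqr. nra.
Qed.

Lemma cosh_pos (y : R) : 0 < cosh y.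
Proof. unfold cosh. pose proof (exp_pos y). pose proof (exp_pos (- y)). lra. Qed.

Lemma tanh_bound (y : R) : -1 < tanh y < 1.
Proof.
  unfold tanh, sinh, cosh. pose proof (exp_pos y). pose proof (exp_pos (- y)).
  split; [apply Rmult_lt_reg_r with ((exp y + exp (- y)) / 2)|
          apply Rmult_lt_reg_r with ((exp y + exp (- y)) / 2)]; try lra;
  field_simplify; lra.
Qed.

Lemma derivable_pt_lim_tanh (y : R) : derivable_pt_lim tanh y (1 - tanh y ^ 2).
Proof.
  assert (Hc : cosh y <> 0) by (pose proof (cosh_pos y); lra).
  apply (derivable_pt_lim_eq _ _ _ _ _
    (derivable_pt_lim_div _ _ y _ _ (derivable_pt_lim_sinh y) (derivable_pt_lim_cosh y) Hc));
    [reflexivity|].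
  unfold tanh, Rsqr. field. exact Hc.
Qed.

Lemma ftime_0 (h : R) : ftime h 0 = 0.
Proof.
  unfold ftime. destruct (Req_EM_T h 0); [lra|].
  rewrite Rmult_0_r, Rdiv_0_l. unfold tanh. rewrite sinh_0. unfold Rdiv. ring.
Qed.

Lemma ftime_bound (h t : R) : -1 < h * ftime h t < 1.
Proof.
  unfold ftime. destruct (Req_EM_T h 0) as [->|hn]; [lra|].
  replace (h * (tanh (h * t / 2) / h)) with (tanh (h * t / 2)) by (field; exact hn).
  apply tanh_bound.
Qed.

Lemma derivable_pt_lim_ftime (h t : R) :
  derivable_pt_lim (ftime h) t ((1 - (h * ftime h t) ^ 2) / 2).
Proof.
  unfold ftime. destruct (Req_EM_T h 0) as [->|hn].
  - apply (derivable_pt_lim_eq _ _ _ _ _ (derivable_pt_lim_div_scal id t 1 2 (derivable_pt_lim_id t)));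
      [reflexivity|field].
  - assert (Hu : derivable_pt_lim (fun s => h * s / 2) t (h * 1 / 2)).
    { apply derivable_pt_lim_div_scal, (derivable_pt_lim_scal id h t 1), derivable_pt_lim_id. }
    apply (derivable_pt_lim_eq _ _ _ _ _
      (derivable_pt_lim_div_scal _ t _ h
        (derivable_pt_lim_comp _ tanh t _ _ Hu (derivable_pt_lim_tanh _))));
      [reflexivity|].
    unfold comp. field. exact hn.
Qed.

Lemma ftime_pos_time (h t : R) : 0 < ftime h t -> 0 < t.
Proof.
  intros Hf. destruct (Rlt_le_dec 0 t) as [|Ht]; [assumption|exfalso].
  destruct (Req_dec t 0) as [->|tn0]; [rewrite ftime_0 in Hf; lra|].
  destruct (MVT_cor2 (ftime h) (fun s => (1 - (h * ftime h s) ^ 2) / 2) t 0)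
    as [c [Hc _]]; [lra|intros; apply derivable_pt_lim_ftime|].
  rewrite ftime_0 in Hc.
  assert (0 < (1 - (h * ftime h c) ^ 2) / 2) by (pose proof (ftime_bound h c); nra).
  nra.
Qed.

Lemma vpart_S (a y : nat -> R) (k : nat) : vpart a y (S k) = vpart a y k + a k * y k.
Proof. reflexivity. Qed.

Lemma vpart_veq (n : nat) (a y z : nat -> R) (k : nat) :
  veq n y z -> (k <= n)%nat -> vpart a y k = vpart a z k.
Proof.
  intros E. induction k as [|k IH]; intros Hk; [reflexivity|].
  rewrite !vpart_S, IH, (E k) by lia. reflexivity.
Qed.

Lemma Hf_veq (n : nat) (a y z : nat -> R) : veq n y z -> Hf n a y = Hf n a z.
Proof. intros E. exact (vpart_veq n a y z n E (le_n n)). Qed.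

Lemma kahan_veq (eps : R) (n : nat) (a y z : nat -> R) :
  veq n y z -> veq n (kahan eps n a y) (kahan eps n a z).
Proof.
  intros E i Hi. unfold kahan, kden.
  rewrite (Hf_veq n a y z E), (E i Hi), (vpart_veq n a y z i E), (vpart_veq n a y z (S i) E)
    by lia.
  reflexivity.
Qed.

Lemma derivable_pt_lim_kden (e : R -> R) (t de : R) (n : nat) (a y : nat -> R) (k : nat) :
  derivable_pt_lim e t de ->
  derivable_pt_lim (fun s => kden (e s) n a y k) t (de * (2 * vpart a y k - Hf n a y)).
Proof.
  intros He.
  apply (derivable_pt_lim_eq _ _ _ _ _
    (derivable_pt_lim_plus _ _ t _ _ (derivable_pt_lim_const 1 t)
       (derivable_pt_lim_scal_right _ t _ (2 * vpart a y k - Hf n a y) He))).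
  - intros s. unfold kden, plus_fct, fct_cte. ring.
  - ring.
Qed.

Section AlongSolution.

Variables (n : nat) (a : nat -> R) (x : R -> nat -> R) (T : R).
Hypothesis Hsol : ode_sol n a x T.

Local Notation H0 := (Hf n a (x 0)).
Local Notation D k t := (kden (ftime H0 t) n a (x 0) k).

Lemma derivable_pt_lim_vpart (k : nat) (t : R) : (k <= n)%nat -> 0 <= t <= T ->
  derivable_pt_lim (fun s => vpart a (x s) k) t
    (Hf n a (x t) * vpart a (x t) k - vpart a (x t) k ^ 2).
Proof.
  intros Hk Ht. induction k as [|k IH].
  - apply (derivable_pt_lim_eq _ _ _ _ _ (derivable_pt_lim_const 0 t)); [reflexivity|].
    change (vpart a (x t) 0) with 0. ring.
  - apply (derivable_pt_lim_eq _ _ _ _ _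
      (derivable_pt_lim_plus _ _ t _ _ (IH ltac:(lia))
         (derivable_pt_lim_scal _ (a k) t _ (Hsol t Ht k ltac:(lia))))); [reflexivity|].
    unfold vfield. rewrite !vpart_S. ring.
Qed.

Lemma Hf_conserved (t : R) : 0 <= t <= T -> Hf n a (x t) = H0.
Proof.
  intros Ht. apply Rminus_diag_uniq.
  apply (linear_ode_zero (fun s => Hf n a (x s) - H0) (fun _ => 0) T); [| |ring|exact Ht].
  - intros s Hs.
    apply (derivable_pt_lim_eq _ _ _ _ _
      (derivable_pt_lim_minus _ _ s _ _ (derivable_pt_lim_vpart n s (le_n n) Hs)
         (derivable_pt_lim_const H0 s))); [reflexivity|].
    unfold Hf, vpart. ring.
  - intros s _. apply continuity_pt_const. intros ? ?. reflexivity.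
Qed.

Lemma derivable_pt_lim_vpart_logistic (k : nat) (t : R) : (k <= n)%nat -> 0 <= t <= T ->
  derivable_pt_lim (fun s => vpart a (x s) k) t (H0 * vpart a (x t) k - vpart a (x t) k ^ 2).
Proof. intros Hk Ht. rewrite <- (Hf_conserved t Ht). exact (derivable_pt_lim_vpart k t Hk Ht). Qed.

Lemma vpart_mul_kden (k : nat) (t : R) : (k <= n)%nat -> 0 <= t <= T ->
  vpart a (x t) k * D k t = vpart a (x 0) k * (1 + ftime H0 t * H0).
Proof.
  intros Hk Ht. apply Rminus_diag_uniq.
  set (c := vpart a (x 0) k).
  pose proof (fun s => derivable_pt_lim_kden _ s _ n a (x 0) k (derivable_pt_lim_ftime H0 s)) as HD.
  pose proof (fun s => derivable_pt_lim_scal_right _ s _ H0 (derivable_pt_lim_ftime H0 s)) as HfH.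
  apply (linear_ode_zero (fun s => vpart a (x s) k * D k s - c * (1 + ftime H0 s * H0))
           (fun s => H0 - vpart a (x s) k - H0 * (1 + ftime H0 s * H0) / 2) T); [| | |exact Ht].
  - intros s Hs.
    apply (derivable_pt_lim_eq _ _ _ _ _
      (derivable_pt_lim_minus _ _ s _ _
         (derivable_pt_lim_mult _ _ s _ _ (derivable_pt_lim_vpart_logistic k s Hk Hs) (HD s))
         (derivable_pt_lim_scal _ c s _ (derivable_pt_lim_plus _ _ s _ _
            (derivable_pt_lim_const 1 s) (HfH s))))); [reflexivity|].
    unfold kden, c. field.
  - intros s Hs.
    apply (derivable_pt_lim_continuity_pt _ s _
      (derivable_pt_lim_minus _ _ s _ _
         (derivable_pt_lim_minus _ _ s _ _ (derivable_pt_lim_const H0 s)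
            (derivable_pt_lim_vpart_logistic k s Hk Hs))
         (derivable_pt_lim_div_scal _ s _ 2 (derivable_pt_lim_scal _ H0 s _
            (derivable_pt_lim_plus _ _ s _ _ (derivable_pt_lim_const 1 s) (HfH s)))))).
  - cbv beta. unfold kden. rewrite ftime_0. unfold c. ring.
Qed.

Lemma kden_ftime_neq0 (k : nat) (t : R) : (k <= n)%nat -> 0 <= t <= T -> D k t <> 0.
Proof.
  intros Hk Ht HD0.
  pose proof (vpart_mul_kden k t Hk Ht) as Hv. rewrite HD0, Rmult_0_r in Hv.
  pose proof (ftime_bound H0 t) as Hb.
  assert (Hc : vpart a (x 0) k = 0).
  { symmetry in Hv. apply Rmult_integral in Hv as [Hc|Hc]; [exact Hc|lra]. }
  unfold kden in HD0. rewrite Hc in HD0. lra.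
Qed.

Lemma coord_mul_kden (i : nat) (t : R) : (i < n)%nat -> 0 <= t <= T ->
  x t i * (D i t * D (S i) t) = x 0 i * ((1 - ftime H0 t * H0) * (1 + ftime H0 t * H0)).
Proof.
  intros Hi Ht. apply Rminus_diag_uniq.
  pose proof (fun s => derivable_pt_lim_kden _ s _ n a (x 0) i (derivable_pt_lim_ftime H0 s)) as HDi.
  pose proof (fun s => derivable_pt_lim_kden _ s _ n a (x 0) (S i) (derivable_pt_lim_ftime H0 s)) as HDj.
  pose proof (fun s => derivable_pt_lim_scal_right _ s _ H0 (derivable_pt_lim_ftime H0 s)) as HfH.
  apply (linear_ode_zero
           (fun s => x s i * (D i s * D (S i) s) - x 0 i * ((1 - ftime H0 s * H0) * (1 + ftime H0 s * H0)))
           (fun s => - H0 ^ 2 * ftime H0 s) T); [| | |exact Ht].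
  - intros s Hs.
    apply (derivable_pt_lim_eq _ _ _ _ _
      (derivable_pt_lim_minus _ _ s _ _
         (derivable_pt_lim_mult _ _ s _ _ (Hsol s Hs i Hi)
            (derivable_pt_lim_mult _ _ s _ _ (HDi s) (HDj s)))
         (derivable_pt_lim_scal _ (x 0 i) s _ (derivable_pt_lim_mult _ _ s _ _
            (derivable_pt_lim_minus _ _ s _ _ (derivable_pt_lim_const 1 s) (HfH s))
            (derivable_pt_lim_plus _ _ s _ _ (derivable_pt_lim_const 1 s) (HfH s)))))); [reflexivity|].
    cbv beta. unfold vfield. rewrite (Hf_conserved s Hs).
    pose proof (vpart_mul_kden i s ltac:(lia) Hs) as Hvi.
    pose proof (vpart_mul_kden (S i) s ltac:(lia) Hs) as Hvj.
    apply Rminus_diag_uniq.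
    transitivity (- x s i *
      (D (S i) s * (vpart a (x s) i * D i s - vpart a (x 0) i * (1 + ftime H0 s * H0))
       + D i s * (vpart a (x s) (S i) * D (S i) s - vpart a (x 0) (S i) * (1 + ftime H0 s * H0)))).
    + unfold kden, mult_fct, plus_fct, minus_fct, fct_cte. field.
    + rewrite Hvi, Hvj. ring.
  - intros s _.
    apply (derivable_pt_lim_continuity_pt _ s _ (derivable_pt_lim_scal _ (- H0 ^ 2) s _
      (derivable_pt_lim_ftime H0 s))).
  - cbv beta. unfold kden. rewrite ftime_0. ring.
Qed.

Lemma ode_sol_kahan (t : R) : 0 <= t <= T -> veq n (x t) (kahan (ftime H0 t) n a (x 0)).
Proof.
  intros Ht i Hi. unfold kahan. rewrite <- (coord_mul_kden i t Hi Ht).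
  field. split; apply kden_ftime_neq0; (assumption || lia).
Qed.

End AlongSolution.

Lemma ode_sol_le (n : nat) (a : nat -> R) (x : R -> nat -> R) (T T' : R) :
  T' <= T -> ode_sol n a x T -> ode_sol n a x T'.
Proof. intros HT Hsol t Ht. apply Hsol. lra. Qed.

Lemma ode_sol_shift (n : nat) (a : nat -> R) (x : R -> nat -> R) (T c : R) :
  0 <= c -> ode_sol n a x (T + c) -> ode_sol n a (fun s => x (s + c)) T.
Proof.
  intros Hc Hsol t Ht i Hi.
  assert (Hshift : derivable_pt_lim (fun s => s + c) t 1).
  { apply (derivable_pt_lim_eq _ _ _ _ _
      (derivable_pt_lim_plus _ _ t _ _ (derivable_pt_lim_id t) (derivable_pt_lim_const c t)));
      [reflexivity|ring]. }
  apply (derivable_pt_lim_eq _ _ _ _ _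
    (derivable_pt_lim_comp _ (fun s => x s i) t _ _ Hshift (Hsol (t + c) ltac:(lra) i Hi)));
    [reflexivity|ring].
Qed.

Lemma kahan_iter_ode_sol (n : nat) (a : nat -> R) (x0 : nat -> R) (eps teps : R)
    (x : R -> nat -> R) :
  0 <= teps -> ftime (Hf n a x0) teps = eps -> veq n (x 0) x0 ->
  forall m : nat, ode_sol n a x (INR m * teps) ->
    veq n (Nat.iter m (kahan eps n a) x0) (x (INR m * teps)).
Proof.
  intros Hteps Heps Hx0 m. induction m as [|m IH]; intros Hsol.
  - rewrite Rmult_0_l. intros i Hi. symmetry. exact (Hx0 i Hi).
  - set (c := INR m * teps).
    assert (Hc : 0 <= c) by (apply Rmult_le_pos; [apply pos_INR|exact Hteps]).
    assert (HSm : INR (S m) * teps = teps + c) by (unfold c; rewrite S_INR; ring).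
    rewrite HSm in Hsol |- *.
    assert (Hm : veq n (Nat.iter m (kahan eps n a) x0) (x c))
      by (apply IH, (ode_sol_le n a x (teps + c) c ltac:(lra) Hsol)).
    pose proof (ode_sol_kahan n a _ teps (ode_sol_shift n a x teps c Hc Hsol) teps
      ltac:(lra)) as Hstep.
    cbv beta in Hstep. rewrite Rplus_0_l in Hstep.
    rewrite (Hf_conserved n a x (teps + c) Hsol c ltac:(lra)), (Hf_veq n a _ _ Hx0), Heps
      in Hstep.
    intros i Hi. rewrite (Hstep i Hi).
    exact (kahan_veq eps n a _ _ Hm i Hi).
Qed.

Theorem mainTheorem9 (n : nat) (a : nat -> R)
  (ha : exists j, (j < n)%nat /\ a j <> 0)
  (x0 : nat -> R) (eps teps : R) (x : R -> nat -> R)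
  (heps : 0 < eps)
  (hteps : ftime (Hf n a x0) teps = eps)
  (hx0 : veq n (x 0) x0) :
  ((ode_sol n a x teps -> kahan_defined eps n a x0 ->
      veq n (x teps) (kahan eps n a x0))
  /\
  (forall m : nat, ode_sol n a x (INR m * teps) ->
      (forall k, (k < m)%nat -> kahan_defined eps n a (Nat.iter k (kahan eps n a) x0)) ->
      veq n (Nat.iter m (kahan eps n a) x0) (x (INR m * teps)))
  /\
  (ode_sol n a x teps -> kahan_defined eps n a x0 ->
    forall I, first_integral n a I -> I (kahan eps n a x0) = I x0)).
Proof.
  assert (Hteps : 0 <= teps) by (apply Rlt_le, (ftime_pos_time (Hf n a x0)); lra).
  pose proof (kahan_iter_ode_sol n a x0 eps teps x Hteps hteps hx0) as Hiter.
  assert (Hstep : ode_sol n a x teps -> veq n (x teps) (kahan eps n a x0)).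
  { intros Hsol i Hi. symmetry. rewrite <- (Rmult_1_l teps) in Hsol |- *.
    exact (Hiter 1%nat Hsol i Hi). }
  split; [|split].
  - intros Hsol _. exact (Hstep Hsol).
  - intros m Hsol _. exact (Hiter m Hsol).
  - intros Hsol _ I [HIveq HIconst].
    rewrite <- (HIveq _ _ (Hstep Hsol)), (HIconst x teps Hteps Hsol).
    exact (HIveq _ _ hx0).
Qed.
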